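(* Let $d>0$, let $J$ satisfy (J) and (J2), and let $f$ satisfy (f3); let $c_*>0$ be the minimal traveling wave speed described in the context. Fix $\sigma\in(0,1)$ and $c\in(0,c_* )$, and let $M$, $\tilde f$, $a$, $A$ and $\phi_*^\sigma$ be as in the context. Then the pointwise limit $\phi_\sigma(x):=\lim_{n\to\infty}A^n[\phi_*^\sigma](x)$ exists for every $x\in\mathbb{R}$, and $\phi=\phi_\sigma$ is a solution of $$d\int_{-\infty}^{+\infty}J(x-y)\phi(y)\,dy-d\phi(x)+c\phi'(x)+f(\phi(x))=0\ \ (-\infty<x<0),\qquad \phi(-\infty)=1,\quad \phi(x)=\sigma\ \ (0\le x<+\infty),$$ with $\phi_\sigma$ continuously differentiable on $(-\infty,0)$ and $0\le\phi_\sigma\le1$.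
   Context: Condition (J): $J\in C(\mathbb{R})\cap L^\infty(\mathbb{R})$, $J\ge 0$, $J(0)>0$, $\int_{\mathbb{R}}J=1$, $J$ even. Condition (J2): there exists $\lambda>0$ with $\int_{\mathbb{R}}J(x)e^{\lambda x}dx<\infty$. Condition (f3): $f\in C^1([0,\infty))$, $f(0)=f(1)=0$, $f>0$ in $(0,1)$, $f'(0)>0>f'(1)$, $f(u)/u$ nonincreasing in $u>0$. Known fact (minimal speed): under (J), (J2), (f3) there is $c_*>0$ such that the problem $d\int_{\mathbb{R}}J(x-y)\phi(y)dy-d\phi(x)+c\phi'(x)+f(\phi(x))=0$ on $\mathbb{R}$, $\phi(-\infty)=1$, $\phi(+\infty)=0$, has a nonincreasing solution $\phi\in L^\infty(\mathbb{R})$ if and only if $c\ge c_*$; such solutions are $C^1$. Construction: choose $M>0$ such that $\tilde f(u):=(cM-d)u+f(u)$ is increasing on $[0,1]$; let $a(x)=\int_{-\infty}^xJ(y)dy$. On $\Omega=\{\phi\in C(\mathbb{R}):0\le\phi\le1\}$ define $A[\phi](x)=\sigma$ for $x\ge0$ and, for $x<0$, $$A[\phi](x)=e^{Mx}\sigma+\frac{e^{Mx}}{c}\int_x^0e^{-M\xi}\Big[d\int_{-\infty}^0J(\xi-y)\phi(y)dy+d\sigma a(\xi)+\tilde f(\phi(\xi))\Big]d\xi.$$ Let $\phi_*$ be a nonincreasing traveling wave solution with speed $c_*$ (as in the known fact), translated so that $\phi_*(0)=\sigma$, and set $\phi_*^\sigma(x)=\max\{\phi_*(x),\sigma\}$ (so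 $\phi_*^\sigma=\phi_*$ on $(-\infty,0)$ and $=\sigma$ on $[0,\infty)$). *)

From Stdlib Require Import Reals.
From Coquelicot Require Import Coquelicot.
Open Scope R_scope.

Definition int_R (g : R -> R) : R :=
  RInt_gen g (Rbar_locally m_infty) (Rbar_locally p_infty).
Definition ex_int_R (g : R -> R) : Prop :=
  ex_RInt_gen g (Rbar_locally m_infty) (Rbar_locally p_infty).
Definition int_minf (g : R -> R) (x : R) : R :=
  RInt_gen g (Rbar_locally m_infty) (at_point x).

Definition cond_J (J : R -> R) : Prop :=
  (forall x, continuous J x) /\
  (exists B, forall x, Rabs (J x) <= B) /\
  (forall x, 0 <= J x) /\
  0 < J 0 /\
  is_RInt_gen J (Rbar_locally m_infty) (Rbar_locally p_infty) 1 /\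
  (forall x, J (- x) = J x).

Definition cond_J2 (J : R -> R) : Prop :=
  exists lam, 0 < lam /\ ex_int_R (fun x => J x * exp (lam * x)).

(* f in C^1([0,oo)): a derivative g on (0,oo), one-sided derivative at 0,
   g continuous on [0,oo) (right-continuous at 0). *)
Definition C1_nonneg (f g : R -> R) : Prop :=
  (forall x, 0 < x -> is_derive f x (g x)) /\
  filterlim (fun h => (f h - f 0) / h) (at_right 0) (locally (g 0)) /\
  (forall x, 0 < x -> continuous g x) /\
  filterlim g (at_right 0) (locally (g 0)).

Definition cond_f3 (f : R -> R) : Prop :=
  exists g, C1_nonneg f g /\
  f 0 = 0 /\ f 1 = 0 /\
  (forall u, 0 < u < 1 -> 0 < f u) /\
  g 0 > 0 /\ 0 > g 1 /\
  (forall u v, 0 < u -> u <= v -> f v / v <= f u / u).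

Definition tw_solution (d : R) (J f : R -> R) (c : R) (phi : R -> R) : Prop :=
  (exists B, forall x, Rabs (phi x) <= B) /\
  (forall x y, x <= y -> phi y <= phi x) /\
  (forall x, ex_derive phi x) /\
  (forall x, ex_int_R (fun y => J (x - y) * phi y)) /\
  (forall x, d * int_R (fun y => J (x - y) * phi y) - d * phi x
             + c * Derive phi x + f (phi x) = 0) /\
  is_lim phi m_infty 1 /\ is_lim phi p_infty 0.

Definition minimal_speed (d : R) (J f : R -> R) (cstar : R) : Prop :=
  forall c, 0 < c -> ((exists phi, tw_solution d J f c phi) <-> cstar <= c).

Definition ftilde (f : R -> R) (c M d : R) (u : R) : R := (c * M - d) * u + f u.

Definition a_fun (J : R -> R) (x : R) : R := int_minf J x.

(* The operator A (defined for all phi : R -> R; used on Omega). *)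
Definition A_op (d : R) (J f : R -> R) (c M sigma : R) (phi : R -> R) (x : R) : R :=
  if Rle_dec 0 x then sigma
  else exp (M * x) * sigma
       + exp (M * x) / c *
         RInt (fun xi => exp (- M * xi) *
                 (d * int_minf (fun y => J (xi - y) * phi y) 0
                  + d * sigma * a_fun J xi
                  + ftilde f c M d (phi xi))) x 0.

Definition phi_sigma_init (phistar : R -> R) (sigma : R) (x : R) : R :=
  Rmax (phistar x) sigma.

From Stdlib Require Import Reals Lra Lia Classical_Prop.
From Coquelicot Require Import Coquelicot.
Open Scope R_scope.

(* Let Omega_L be the [0,1]-valued, L-Lipschitz profiles equal to sigma on [0,oo)
   ([admissible]).  On x < 0, A[phi] solves c y' = c M y - H[phi], y(0) = sigma, where H[phi]
   ([source]) is the bracket in the definition of A; since 0 <= H[phi] <= c M, A maps Omega_L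
   into Omega_M, and A is monotone because ftilde is increasing.  As c < c_*, the truncated wave
   phi_*^sigma is a subsolution, phi_*^sigma <= A[phi_*^sigma], so the iterates increase to a
   limit phi_sigma.  Being equi-Lipschitz they converge locally uniformly, which is enough to pass
   to the limit inside A: A[phi_sigma] = phi_sigma.  Differentiating this identity gives the
   equation on (-oo,0), and phi_* <= phi_sigma <= 1 gives phi_sigma(-oo) = 1. *)

Lemma continuous_lipschitz (g : R -> R) L :
  (forall x y, Rabs (g x - g y) <= L * Rabs (x - y)) -> forall x, continuous g x.
Proof.
  intros HL x. apply filterlim_locally. intros eps.
  assert (Hd : 0 < eps / (Rabs L + 1)).
  { apply Rdiv_lt_0_compat; [apply cond_pos | generalize (Rabs_pos L); lra]. }
  exists (mkposreal _ Hd). intros y Hy. change (Rabs (g y - g x) < eps).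
  change (Rabs (y - x) < eps / (Rabs L + 1)) in Hy.
  assert (Hy' : Rabs L * Rabs (y - x) <= Rabs L * (eps / (Rabs L + 1))).
  { apply Rmult_le_compat_l; [apply Rabs_pos | lra]. }
  assert (He : Rabs L * (eps / (Rabs L + 1)) < eps).
  { apply (Rmult_lt_reg_r (Rabs L + 1)); [generalize (Rabs_pos L); lra |].
    field_simplify; [generalize (cond_pos eps); lra | generalize (Rabs_pos L); lra]. }
  specialize (HL y x). generalize (Rle_abs L) (Rabs_pos (y - x)). nra.
Qed.

Lemma is_derive_continuity_pt (g : R -> R) x l : is_derive g x l -> continuity_pt g x.
Proof. intros H. apply derivable_continuous_pt, ex_derive_Reals_0. exists l. exact H. Qed.

Lemma ex_derive_continuous_R (g : R -> R) x : ex_derive g x -> continuous g x.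
Proof. intros [l Hl]. apply continuity_pt_filterlim. exact (is_derive_continuity_pt g x l Hl). Qed.

Lemma continuous_exp_lin (k x : R) : continuous (fun y => exp (k * y)) x.
Proof.
  apply continuous_exp_comp.
  apply (continuous_mult (fun _ => k) (fun y => y)); [apply continuous_const | apply continuous_id].
Qed.

Lemma exp_mul_exp_opp (k x : R) : exp (k * x) * exp (- k * x) = 1.
Proof. rewrite <- exp_plus. replace (k * x + - k * x) with 0 by ring. apply exp_0. Qed.

Lemma exp_le_1 (t : R) : t <= 0 -> exp t <= 1.
Proof.
  intros Ht. rewrite <- exp_0. destruct (Rle_lt_or_eq_dec t 0 Ht) as [Hlt | ->]; [| lra].
  apply Rlt_le, exp_increasing, Hlt.
Qed.

Lemma Rmax_lipschitz a b s : Rabs (Rmax a s - Rmax b s) <= Rabs (a - b).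
Proof.
  unfold Rmax. generalize (Rle_abs (a - b)) (Rle_abs (- (a - b))). rewrite Rabs_Ropp.
  destruct (Rle_dec a s); destruct (Rle_dec b s); intros; apply Rabs_le_between; lra.
Qed.

Lemma ex_RInt_continuous_R (g : R -> R) a b :
  (forall x, continuous g x) -> ex_RInt g a b.
Proof. intros Hg. apply (@ex_RInt_continuous R_CompleteNormedModule). auto. Qed.

Lemma RInt_Chasles_R (g : R -> R) a b c :
  ex_RInt g a b -> ex_RInt g b c -> RInt g a c = RInt g a b + RInt g b c :> R.
Proof. intros Hab Hbc. rewrite <- (RInt_Chasles g a b c); auto. Qed.

Lemma RInt_scal_R (g : R -> R) k a b : ex_RInt g a b -> RInt (fun y => k * g y) a b = k * RInt g a b.
Proof. intros H. exact (RInt_scal g a b k H). Qed.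

Lemma abs_RInt_le_const_dist (g : R -> R) a b C :
  ex_RInt g a b -> (forall t, Rabs (g t) <= C) -> Rabs (RInt g a b) <= C * Rabs (b - a).
Proof.
  intros Hex HC. destruct (Rle_lt_dec a b) as [Hab | Hab].
  - rewrite (Rabs_right (b - a)), Rmult_comm by lra. apply abs_RInt_le_const; auto.
  - rewrite <- (opp_RInt_swap g b a) by (apply ex_RInt_swap; auto).
    change (Rabs (- RInt g b a) <= C * Rabs (b - a)).
    rewrite Rabs_Ropp, (Rabs_left (b - a)), Rmult_comm by lra.
    replace (- (b - a)) with (a - b) by ring.
    apply abs_RInt_le_const; [lra | apply ex_RInt_swap; auto | auto].
Qed.

Lemma RInt_comp_reflect (g : R -> R) xi p q : (forall x, continuous g x) ->
  RInt (fun y => g (xi - y)) p q = RInt g (xi - q) (xi - p).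
Proof.
  intros Hc. apply is_RInt_unique.
  assert (H0 : is_RInt g (-1 * p + xi) (-1 * q + xi) (RInt g (-1 * p + xi) (-1 * q + xi)))
    by (apply (RInt_correct g), ex_RInt_continuous_R, Hc).
  assert (H1 := is_RInt_scal _ _ _ (-1) _ (is_RInt_comp_lin _ _ _ _ _ _ H0)).
  replace (RInt g (xi - q) (xi - p)) with (scal (-1) (RInt g (-1 * p + xi) (-1 * q + xi))).
  - apply is_RInt_ext with (2 := H1). intros x _.
    unfold scal; simpl; unfold mult; simpl. replace (-1 * x + xi) with (xi - x) by ring. ring.
  - rewrite <- (opp_RInt_swap g) by (apply ex_RInt_continuous_R, Hc).
    unfold scal, opp; simpl; unfold mult; simpl.
    replace (-1 * p + xi) with (xi - p) by ring. replace (-1 * q + xi) with (xi - q) by ring. ring.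
Qed.

Lemma RInt_comp_shift (g : R -> R) h p q : (forall x, continuous g x) ->
  RInt (fun y => g (y + h)) p q = RInt g (p + h) (q + h).
Proof.
  intros Hc. apply is_RInt_unique.
  assert (H0 : is_RInt g (1 * p + h) (1 * q + h) (RInt g (1 * p + h) (1 * q + h)))
    by (apply (RInt_correct g), ex_RInt_continuous_R, Hc).
  assert (H1 := is_RInt_comp_lin _ _ _ _ _ _ H0).
  replace (p + h) with (1 * p + h) by ring. replace (q + h) with (1 * q + h) by ring.
  apply is_RInt_ext with (2 := H1). intros x _.
  unfold scal; simpl; unfold mult; simpl. replace (1 * x + h) with (x + h) by ring. ring.
Qed.

Lemma RInt_exp_neg M x : 0 < M -> RInt (fun xi => exp (- M * xi)) x 0 = (exp (- M * x) - 1) / M.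
Proof.
  intros HM. apply is_RInt_unique.
  replace ((exp (- M * x) - 1) / M) with (minus (- exp (- M * 0) / M) (- exp (- M * x) / M)).
  - apply (is_RInt_derive (fun xi => - exp (- M * xi) / M)).
    + intros y _. auto_derive; auto. field. lra.
    + intros y _. apply continuous_exp_lin.
  - unfold minus, plus, opp; simpl. rewrite Rmult_0_r, exp_0. field. lra.
Qed.

Lemma is_derive_RInt_lower (G : R -> R) b x : (forall y, continuous G y) ->
  is_derive (fun y => RInt G y b) x (- G x).
Proof.
  intros HG. apply (is_derive_RInt' G (fun y => RInt G y b) x b); [| apply HG].
  exists (mkposreal 1 Rlt_0_1). intros y _. apply (RInt_correct G), ex_RInt_continuous_R, HG.
Qed.

Lemma is_lim_minf_monotone (h : R -> R) (b C : R) :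
  (forall x y, x <= y <= b -> h y <= h x) -> (forall x, x <= b -> h x <= C) ->
  exists l : R, is_lim h m_infty l.
Proof.
  intros Hmono Hbnd.
  set (E := fun v => exists x, x <= b /\ v = h x).
  destruct (completeness E) as [l [Hub Hlub]].
  - exists C. intros v [x [Hx ->]]. auto.
  - exists (h b), b. split; [lra | reflexivity].
  - exists l. apply is_lim_spec. intros eps.
    assert (exists x0, x0 <= b /\ l - eps < h x0) as [x0 [Hx0 Hlt]].
    { apply NNPP. intros Hnone.
      assert (l <= l - eps); [| generalize (cond_pos eps); lra].
      apply Hlub. intros v [x [Hx ->]].
      apply Rnot_lt_le. intros Hv. apply Hnone. exists x. auto. }
    exists x0. intros a Ha.
    assert (h a <= l) by (apply Hub; exists a; split; [lra | reflexivity]).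
    assert (h x0 <= h a) by (apply Hmono; lra).
    apply Rabs_lt_between'. generalize (cond_pos eps). lra.
Qed.

Lemma is_lim_minf_le (h : R -> R) (l C : R) :
  is_lim h m_infty l -> (exists M, forall a, a < M -> h a <= C) -> l <= C.
Proof.
  intros Hl HC. exact (is_lim_le_loc h (fun _ => C) m_infty l C HC Hl (is_lim_const C m_infty)).
Qed.

Lemma is_lim_minf_ge (h : R -> R) (l C : R) :
  is_lim h m_infty l -> (exists M, forall a, a < M -> C <= h a) -> C <= l.
Proof.
  intros Hl HC. exact (is_lim_le_loc (fun _ => C) h m_infty C l HC (is_lim_const C m_infty) Hl).
Qed.

Lemma is_lim_minf_abs_le (h : R -> R) (l C : R) :
  is_lim h m_infty l -> (exists M, forall a, a < M -> Rabs (h a) <= C) -> Rabs l <= C.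
Proof.
  intros Hl [M HM]. apply Rabs_le_between. split.
  - apply (is_lim_minf_ge h); auto. exists M. intros a Ha.
    specialize (HM a Ha). apply Rabs_le_between in HM. lra.
  - apply (is_lim_minf_le h); auto. exists M. intros a Ha.
    specialize (HM a Ha). apply Rabs_le_between in HM. lra.
Qed.

Lemma is_lim_minf_shift (h : R -> R) (l s : R) :
  is_lim h m_infty l -> is_lim (fun a => h (a + s)) m_infty l.
Proof.
  intros Hl. apply (is_lim_comp h (fun a => a + s) m_infty l m_infty Hl).
  - apply is_lim_spec. intros M. exists (M - s). intros x Hx. lra.
  - exists 0. intros x _. discriminate.
Qed.

Lemma is_RInt_gen_minf_is_lim (g : R -> R) (b l : R) :
  (forall a, ex_RInt g a b) ->
  is_RInt_gen g (Rbar_locally m_infty) (at_point b) l <->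
  is_lim (fun a => RInt g a b) m_infty l.
Proof.
  intros Hex. split.
  - intros H P HP. destruct (H P HP) as [Q S [M HM] HS HQS].
    exists M. intros a Ha. destruct (HQS a b (HM a Ha) HS) as [y [Hy HPy]].
    simpl in Hy. rewrite (is_RInt_unique _ _ _ _ Hy). exact HPy.
  - intros H P HP. destruct (H P HP) as [M HM].
    apply Filter_prod with (fun a => a < M) (fun x => x = b).
    + exists M. auto.
    + reflexivity.
    + intros x y Hx <-. exists (RInt g x y). split; [exact (RInt_correct g _ _ (Hex _)) | auto].
Qed.

Lemma is_RInt_gen_pinf_of_is_lim (g : R -> R) (a l : R) :
  (forall b, ex_RInt g a b) ->
  is_lim (fun b => RInt g a b) p_infty l ->
  is_RInt_gen g (at_point a) (Rbar_locally p_infty) l.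
Proof.
  intros Hex H P HP. destruct (H P HP) as [M HM].
  apply Filter_prod with (fun x => x = a) (fun b => M < b).
  - reflexivity.
  - exists M. auto.
  - intros x y <- Hy. exists (RInt g x y). split; [exact (RInt_correct g _ _ (Hex _)) | auto].
Qed.

Lemma int_minf_is_lim (g : R -> R) (b C : R) :
  (forall x, continuous g x) -> (forall x, 0 <= g x) ->
  (forall a, a <= b -> RInt g a b <= C) ->
  is_lim (fun a => RInt g a b) m_infty (int_minf g b).
Proof.
  intros Hc Hpos Hbnd.
  assert (Hex : forall a a', ex_RInt g a a') by (intros; apply ex_RInt_continuous_R, Hc).
  destruct (is_lim_minf_monotone (fun a => RInt g a b) b C) as [l Hl]; auto.
  { intros x y Hxy. rewrite (RInt_Chasles_R g x y b) by auto.
    assert (0 <= RInt g x y) by (apply RInt_ge_0; auto; lra). lra. }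
  assert (Hgen := proj2 (is_RInt_gen_minf_is_lim g b l (fun a => Hex a b)) Hl).
  unfold int_minf. rewrite (is_RInt_gen_unique _ l Hgen). exact Hl.
Qed.

Lemma is_RInt_gen_R_approx (g : R -> R) (l : R) :
  is_RInt_gen g (Rbar_locally m_infty) (Rbar_locally p_infty) l ->
  forall eps, 0 < eps -> exists M1 M2, forall a b, a < M1 -> M2 < b ->
    Rabs (RInt g a b - l) < eps.
Proof.
  intros H eps Heps.
  destruct (H (ball l (mkposreal eps Heps)) (locally_ball _ _)) as [Q S [M1 HM1] [M2 HM2] HQS].
  exists M1, M2. intros a b Ha Hb.
  destruct (HQS a b (HM1 a Ha) (HM2 b Hb)) as [y [Hy Hball]].
  simpl in Hy. rewrite (is_RInt_unique _ _ _ _ Hy). exact Hball.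
Qed.

Lemma is_RInt_gen_R_bounds (g : R -> R) l lo hi :
  is_RInt_gen g (Rbar_locally m_infty) (Rbar_locally p_infty) l ->
  (forall a b, a <= b -> lo <= RInt g a b <= hi) -> lo <= l <= hi.
Proof.
  intros H Hb.
  assert (Happ : forall eps, 0 < eps -> lo - eps <= l <= hi + eps).
  { intros eps Heps. destruct (is_RInt_gen_R_approx g l H eps Heps) as [M1 [M2 HM]].
    set (a := Rmin M1 M2 - 1). set (b := Rmax M1 M2 + 1).
    assert (a < M1 /\ M2 < b /\ a <= b).
    { unfold a, b. generalize (Rmin_l M1 M2) (Rmin_r M1 M2) (Rmax_l M1 M2) (Rmax_r M1 M2). lra. }
    specialize (HM a b ltac:(lra) ltac:(lra)). specialize (Hb a b ltac:(lra)).
    apply Rabs_lt_between' in HM. lra. }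
  split; apply Rnot_lt_le; intros Hlt.
  - specialize (Happ ((lo - l) / 2) ltac:(lra)). lra.
  - specialize (Happ ((l - hi) / 2) ltac:(lra)). lra.
Qed.

(** * Pointwise and locally uniform convergence *)

Lemma is_lim_seq_between (v : nat -> R) (l lo hi : R) :
  is_lim_seq v l -> (forall n, lo <= v n <= hi) -> lo <= l <= hi.
Proof.
  intros H Hb. split.
  - exact (is_lim_seq_le (fun _ => lo) v lo l (fun n => proj1 (Hb n)) (is_lim_seq_const lo) H).
  - exact (is_lim_seq_le v (fun _ => hi) l hi (fun n => proj2 (Hb n)) H (is_lim_seq_const hi)).
Qed.

Lemma is_lim_seq_grid (v : nat -> R -> R) (w : R -> R) (del eps : R) : 0 < eps ->
  (forall x, is_lim_seq (fun n => v n x) (w x)) ->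
  forall K : nat, exists N, forall k n, (k <= K)%nat -> (N <= n)%nat ->
    Rabs (w (- (INR k * del)) - v n (- (INR k * del))) <= eps.
Proof.
  intros Heps Hl.
  assert (Hpt : forall x, exists N, forall n, (N <= n)%nat -> Rabs (w x - v n x) <= eps).
  { intros x. destruct (proj2 (is_lim_seq_spec _ _) (Hl x) (mkposreal eps Heps)) as [N HN].
    exists N. intros n Hn. specialize (HN n Hn). rewrite Rabs_minus_sym. simpl in HN. lra. }
  induction K as [| K [N1 H1]].
  - destruct (Hpt (- (INR 0 * del))) as [N HN]. exists N. intros k n Hk Hn.
    replace k with 0%nat by lia. auto.
  - destruct (Hpt (- (INR (S K) * del))) as [N2 H2].
    exists (Nat.max N1 N2). intros k n Hk Hn.
    destruct (Nat.eq_dec k (S K)) as [-> | Hne]; [apply H2 | apply H1]; lia.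
Qed.

Lemma is_lim_seq_equilipschitz_uniform (v : nat -> R -> R) (w : R -> R) L : 0 <= L ->
  (forall n x y, Rabs (v n x - v n y) <= L * Rabs (x - y)) ->
  (forall x y, Rabs (w x - w y) <= L * Rabs (x - y)) ->
  (forall x, is_lim_seq (fun n => v n x) (w x)) ->
  forall R0 eps, 0 <= R0 -> 0 < eps -> exists N, forall n, (N <= n)%nat ->
    forall x, - R0 <= x <= 0 -> Rabs (w x - v n x) <= eps.
Proof.
  intros HL Hv Hw Hl R0 eps HR0 Heps.
  set (del := eps / (4 * (L + 1))).
  assert (Hdel : 0 < del) by (unfold del; apply Rdiv_lt_0_compat; lra).
  assert (Hdel2 : L * del <= eps / 4).
  { unfold del. apply (Rmult_le_reg_r (4 * (L + 1))); [lra |]. field_simplify; [nra | lra]. }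
  destruct (nfloor_ex (R0 / del)) as [K [HK1 HK2]];
    [apply Rmult_le_pos; [lra | apply Rlt_le, Rinv_0_lt_compat; lra] |].
  (* The grid points - k del, k <= K, are finitely many, so convergence is uniform on them. *)
  destruct (is_lim_seq_grid v w del (eps / 2) ltac:(lra) Hl K) as [N HN].
  exists N. intros n Hn x Hx.
  destruct (nfloor_ex (- x / del)) as [k [Hk1 Hk2]];
    [apply Rmult_le_pos; [lra | apply Rlt_le, Rinv_0_lt_compat; lra] |].
  assert (Hkx : INR k * del <= - x < INR k * del + del).
  { apply (Rmult_le_compat_r del) in Hk1; [| lra]. apply (Rmult_lt_compat_r del) in Hk2; [| lra].
    unfold Rdiv in Hk1, Hk2. rewrite Rmult_assoc, Rinv_l, Rmult_1_r in Hk1, Hk2 by lra. lra. }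
  assert (HkK : (k <= K)%nat).
  { assert (Hk : INR k < INR K + 1).
    { eapply Rle_lt_trans; [apply Hk1 |]. eapply Rle_lt_trans; [| apply HK2].
      unfold Rdiv. apply Rmult_le_compat_r; [apply Rlt_le, Rinv_0_lt_compat |]; lra. }
    rewrite <- S_INR in Hk. apply INR_lt in Hk. lia. }
  specialize (HN k n HkK Hn).
  set (g := - (INR k * del)) in *.
  assert (Hxg : Rabs (x - g) <= del) by (apply Rabs_le_between'; unfold g; lra).
  assert (A1 := Hw x g). assert (A2 := Hv n g x). rewrite Rabs_minus_sym in Hxg.
  rewrite (Rabs_minus_sym g x) in A2.
  assert (L * Rabs (x - g) <= L * del) by (apply Rmult_le_compat_l; [| rewrite Rabs_minus_sym]; auto).
  replace (w x - v n x) with ((w x - w g) + (w g - v n g) + (v n g - v n x)) by ring.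
  eapply Rle_trans; [apply Rabs_triang |].
  eapply Rle_trans; [apply Rplus_le_compat_r, Rabs_triang |]. lra.
Qed.

(** * Convolution with the kernel *)

Definition admissible (sigma L : R) (phi : R -> R) : Prop :=
  (forall x y, Rabs (phi x - phi y) <= L * Rabs (x - y)) /\
  (forall x, 0 <= phi x <= 1) /\ (forall x, 0 <= x -> phi x = sigma).

Lemma admissible_continuous sigma L phi : admissible sigma L phi -> forall x, continuous phi x.
Proof. intros [Hl _]. exact (continuous_lipschitz phi L Hl). Qed.

Lemma admissible_lip_nonneg sigma L phi : admissible sigma L phi -> 0 <= L.
Proof.
  intros [Hlip _]. specialize (Hlip 1 0). rewrite Rminus_0_r, Rabs_R1, Rmult_1_r in Hlip.
  generalize (Rabs_pos (phi 1 - phi 0)). lra.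
Qed.

Lemma admissible_weaken sigma L L' phi : L <= L' -> admissible sigma L phi -> admissible sigma L' phi.
Proof.
  intros HL [Hlip Hrest]. split; auto. intros x y. eapply Rle_trans; [apply Hlip |].
  apply Rmult_le_compat_r; [apply Rabs_pos | exact HL].
Qed.

Lemma admissible_is_lim_seq sigma L (v : nat -> R -> R) (w : R -> R) :
  (forall n, admissible sigma L (v n)) -> (forall x, is_lim_seq (fun n => v n x) (w x)) ->
  admissible sigma L w.
Proof.
  intros Hv Hl. split; [| split].
  - intros x y. apply Rabs_le_between.
    apply (is_lim_seq_between _ _ _ _ (is_lim_seq_minus' _ _ _ _ (Hl x) (Hl y))).
    intros n. apply Rabs_le_between, (proj1 (Hv n)).
  - intros x. apply (is_lim_seq_between _ _ 0 1 (Hl x)). intros n. apply (Hv n).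
  - intros x Hx. assert (H := is_lim_seq_between _ _ sigma sigma (Hl x)).
    cut (sigma <= w x <= sigma); [lra |]. apply H.
    intros n. destruct (Hv n) as [_ [_ Hs]]. rewrite Hs by auto. lra.
Qed.

Definition conv_neg (J phi : R -> R) (xi : R) : R := int_minf (fun y => J (xi - y) * phi y) 0.

Section Kernel.

Variables (J : R -> R) (B : R).
Hypothesis J_cont : forall x, continuous J x.
Hypothesis J_range : forall x, 0 <= J x <= B.
Hypothesis J_mass : is_RInt_gen J (Rbar_locally m_infty) (Rbar_locally p_infty) 1.

Lemma ex_RInt_J a b : ex_RInt J a b.
Proof. apply ex_RInt_continuous_R, J_cont. Qed.

Lemma RInt_J_ge0 a b : a <= b -> 0 <= RInt J a b.
Proof. intros Hab. apply RInt_ge_0; auto using ex_RInt_J. intros x _. apply J_range. Qed.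

Lemma RInt_J_le1 a b : a <= b -> RInt J a b <= 1.
Proof.
  intros Hab. apply Rnot_lt_le. intros Hlt.
  destruct (is_RInt_gen_R_approx J 1 J_mass (RInt J a b - 1) ltac:(lra)) as [M1 [M2 HM]].
  set (a' := Rmin a (M1 - 1)). set (b' := Rmax b (M2 + 1)).
  assert (a' <= a /\ a' < M1) by (unfold a'; generalize (Rmin_l a (M1 - 1)) (Rmin_r a (M1 - 1)); lra).
  assert (b <= b' /\ M2 < b') by (unfold b'; generalize (Rmax_l b (M2 + 1)) (Rmax_r b (M2 + 1)); lra).
  specialize (HM a' b' ltac:(lra) ltac:(lra)).
  rewrite (RInt_Chasles_R J a' a b'), (RInt_Chasles_R J a b b') in HM by apply ex_RInt_J.
  assert (0 <= RInt J a' a) by (apply RInt_J_ge0; lra).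
  assert (0 <= RInt J b b') by (apply RInt_J_ge0; lra).
  apply Rabs_lt_between' in HM. lra.
Qed.

Lemma RInt_J_tail eps : 0 < eps ->
  exists T, forall b b', T <= b -> b <= b' -> RInt J b b' <= eps.
Proof.
  intros Heps. destruct (is_RInt_gen_R_approx J 1 J_mass eps Heps) as [M1 [M2 HM]].
  exists (M2 + 1). intros b b' Hb Hbb.
  set (a := Rmin (M1 - 1) b).
  assert (a < M1 /\ a <= b) by (unfold a; generalize (Rmin_l (M1 - 1) b) (Rmin_r (M1 - 1) b); lra).
  specialize (HM a b ltac:(lra) ltac:(lra)).
  assert (H1 := RInt_J_le1 a b' ltac:(lra)).
  rewrite (RInt_Chasles_R J a b b') in H1 by apply ex_RInt_J.
  apply Rabs_lt_between' in HM. lra.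
Qed.

Lemma continuous_J_reflect xi y : continuous (fun y => J (xi - y)) y.
Proof.
  apply (continuous_comp (fun y => xi - y) J); [| apply J_cont].
  apply (continuous_minus (fun _ => xi) (fun y => y)); [apply continuous_const | apply continuous_id].
Qed.

Lemma a_fun_is_lim xi : is_lim (fun a => RInt J a xi) m_infty (a_fun J xi).
Proof.
  apply (int_minf_is_lim J xi 1 J_cont); [intros; apply J_range |].
  exact (fun a Ha => RInt_J_le1 a xi Ha).
Qed.

Lemma a_fun_diff xi xi' : a_fun J xi' - a_fun J xi = RInt J xi xi'.
Proof.
  assert (Hdiff := is_lim_minus' _ _ m_infty _ _ (a_fun_is_lim xi') (a_fun_is_lim xi)).
  assert (Hconst : is_lim (fun a => RInt J a xi' - RInt J a xi) m_infty (RInt J xi xi')).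
  { apply (is_lim_ext (fun _ => RInt J xi xi')); [| apply is_lim_const].
    intros a. symmetry. change (RInt J a xi' - RInt J a xi = RInt J xi xi').
    rewrite (RInt_Chasles_R J a xi xi') by apply ex_RInt_J. ring. }
  apply is_lim_unique in Hdiff. apply is_lim_unique in Hconst.
  rewrite Hdiff in Hconst. injection Hconst. auto.
Qed.

Lemma a_fun_lip xi xi' : Rabs (a_fun J xi' - a_fun J xi) <= B * Rabs (xi' - xi).
Proof.
  rewrite a_fun_diff. apply abs_RInt_le_const_dist; [apply ex_RInt_J |].
  intros t. rewrite Rabs_right; [apply J_range | apply Rle_ge, J_range].
Qed.

Lemma continuous_kernel (phi : R -> R) xi :
  (forall y, continuous phi y) -> forall y, continuous (fun y => J (xi - y) * phi y) y.
Proof.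
  intros Hphi y. apply (continuous_mult (fun y => J (xi - y)) phi); auto using continuous_J_reflect.
Qed.

Lemma RInt_kernel_abs_le xi (h : R -> R) p q m : p <= q -> (forall y, continuous h y) ->
  (forall y, p <= y <= q -> Rabs (h y) <= m) ->
  Rabs (RInt (fun y => J (xi - y) * h y) p q) <= m * RInt J (xi - q) (xi - p).
Proof.
  intros Hpq Hh Hm.
  assert (Hex : ex_RInt (fun y => J (xi - y) * h y) p q)
    by apply ex_RInt_continuous_R, continuous_kernel, Hh.
  assert (Hscal : forall k, RInt (fun y => k * J (xi - y)) p q = k * RInt J (xi - q) (xi - p)).
  { intros k. rewrite <- (RInt_comp_reflect J xi p q J_cont).
    exact (RInt_scal (fun y => J (xi - y)) p q k
             (ex_RInt_continuous_R _ p q (continuous_J_reflect xi))). }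
  assert (Hexk : forall k, ex_RInt (fun y => k * J (xi - y)) p q).
  { intros k. apply ex_RInt_continuous_R. intros y.
    apply (continuous_mult (fun _ => k) (fun y => J (xi - y)));
      auto using continuous_const, continuous_J_reflect. }
  apply Rabs_le_between. split.
  - rewrite Ropp_mult_distr_l, <- Hscal. apply RInt_le; auto. intros y Hy. specialize (Hm y ltac:(lra)).
    specialize (J_range (xi - y)). apply Rabs_le_between in Hm. nra.
  - rewrite <- Hscal. apply RInt_le; auto. intros y Hy. specialize (Hm y ltac:(lra)).
    specialize (J_range (xi - y)). apply Rabs_le_between in Hm. nra.
Qed.

Lemma RInt_kernel_le_RInt_J xi (phi : R -> R) p q : p <= q -> (forall y, continuous phi y) ->
  (forall y, 0 <= phi y <= 1) -> RInt (fun y => J (xi - y) * phi y) p q <= RInt J (xi - q) (xi - p).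
Proof.
  intros Hpq Hc Hb.
  assert (H := RInt_kernel_abs_le xi phi p q 1 Hpq Hc).
  rewrite Rmult_1_l in H. apply Rabs_le_between, H.
  intros y _. rewrite Rabs_right; [apply Hb | apply Rle_ge, Hb].
Qed.

Variable sigma : R.

Lemma conv_neg_is_lim L phi xi : admissible sigma L phi ->
  is_lim (fun a => RInt (fun y => J (xi - y) * phi y) a 0) m_infty (conv_neg J phi xi).
Proof.
  intros Hphi. pose proof (admissible_continuous _ _ _ Hphi) as Hc.
  apply int_minf_is_lim with 1; [apply continuous_kernel, Hc | |].
  - intros y. apply Rmult_le_pos; [apply J_range | apply Hphi].
  - intros a Ha. eapply Rle_trans; [apply RInt_kernel_le_RInt_J; auto; apply Hphi |].
    apply RInt_J_le1. lra.
Qed.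

Lemma conv_neg_a_fun_bounds L phi xi : admissible sigma L phi ->
  0 <= conv_neg J phi xi /\ 0 <= a_fun J xi /\ conv_neg J phi xi + a_fun J xi <= 1.
Proof.
  intros Hphi. pose proof (admissible_continuous _ _ _ Hphi) as Hc.
  pose proof (conv_neg_is_lim L phi xi Hphi) as Hconv.
  split; [| split].
  - apply (is_lim_minf_ge _ _ 0 Hconv). exists 0. intros a Ha.
    apply RInt_ge_0; [lra | apply ex_RInt_continuous_R, continuous_kernel, Hc |].
    intros y _. apply Rmult_le_pos; [apply J_range | apply Hphi].
  - apply (is_lim_minf_ge _ _ 0 (a_fun_is_lim xi)). exists xi. intros a Ha. apply RInt_J_ge0. lra.
  - apply (is_lim_minf_le _ _ 1 (is_lim_plus' _ _ _ _ _ Hconv (a_fun_is_lim xi))).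
    exists (Rmin 0 xi). intros a Ha.
    assert (a < 0 /\ a < xi) by (generalize (Rmin_l 0 xi) (Rmin_r 0 xi); lra).
    assert (H1 := RInt_kernel_le_RInt_J xi phi a 0 ltac:(lra) Hc (proj1 (proj2 Hphi))).
    assert (H2 := RInt_J_le1 a (xi - a) ltac:(lra)).
    rewrite (RInt_Chasles_R J a xi (xi - a)) in H2 by apply ex_RInt_J.
    rewrite Rminus_0_r in H1. lra.
Qed.

Lemma conv_neg_mono L1 L2 phi psi xi : admissible sigma L1 phi -> admissible sigma L2 psi ->
  (forall x, phi x <= psi x) -> conv_neg J phi xi <= conv_neg J psi xi.
Proof.
  intros Hphi Hpsi Hle. change (Rbar_le (conv_neg J phi xi) (conv_neg J psi xi)).
  apply (is_lim_le_loc (fun a => RInt (fun y => J (xi - y) * phi y) a 0)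
    (fun a => RInt (fun y => J (xi - y) * psi y) a 0) m_infty);
    [| exact (conv_neg_is_lim L1 phi xi Hphi) | exact (conv_neg_is_lim L2 psi xi Hpsi)].
  exists 0. intros a Ha. apply RInt_le; [lra | | |].
  - apply ex_RInt_continuous_R, continuous_kernel, (admissible_continuous _ _ _ Hphi).
  - apply ex_RInt_continuous_R, continuous_kernel, (admissible_continuous _ _ _ Hpsi).
  - intros y _. apply Rmult_le_compat_l; [apply J_range | apply Hle].
Qed.

Lemma RInt_kernel_translate (phi : R -> R) xi xi' p q : (forall y, continuous phi y) ->
  RInt (fun y => J (xi' - y) * phi y) p q
  = RInt (fun y => J (xi - y) * phi (y + (xi' - xi))) (p - (xi' - xi)) (q - (xi' - xi)) :> R.
Proof.
  intros Hc. set (h := xi' - xi).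
  transitivity (RInt (fun y => (fun y => J (xi' - y) * phi y) (y + h)) (p - h) (q - h)).
  - rewrite (RInt_comp_shift _ h _ _ (continuous_kernel phi xi' Hc)). f_equal; ring.
  - apply RInt_ext. intros x _. cbv beta.
    replace (xi' - (x + h)) with (xi - x) by (unfold h; ring). reflexivity.
Qed.

Lemma RInt_kernel_shift_le L phi xi xi' a : admissible sigma L phi -> a <= 0 ->
  Rabs (RInt (fun y => J (xi' - y) * phi y) a 0
        - RInt (fun y => J (xi - y) * phi y) (a - (xi' - xi)) 0) <= (L + B) * Rabs (xi' - xi).
Proof.
  intros Hphi Ha. pose proof (admissible_continuous _ _ _ Hphi) as Hc.
  assert (HL := admissible_lip_nonneg _ _ _ Hphi).
  (* After translating by h = xi' - xi, what is left is an increment of phi (at most L |h|) and an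
     integral over an interval of length |h| (at most B |h|). *)
  rewrite (RInt_kernel_translate phi xi xi' a 0 Hc).
  set (h := xi' - xi). destruct Hphi as [Hlip [Hb _]].
  assert (Hch : forall y, continuous (fun y => phi (y + h)) y).
  { intros y. apply (continuous_comp (fun y => y + h) phi); [| apply Hc].
    apply (continuous_plus (fun y => y) (fun _ => h)); [apply continuous_id | apply continuous_const]. }
  assert (Hex : forall g p q, (forall y, continuous g y) -> ex_RInt (fun y => J (xi - y) * g y) p q)
    by (intros; apply ex_RInt_continuous_R, continuous_kernel; auto).
  rewrite (RInt_Chasles_R _ (a - h) (0 - h) 0) by (apply Hex, Hc).
  assert (Ediff : RInt (fun y => J (xi - y) * phi (y + h)) (a - h) (0 - h)
                  - RInt (fun y => J (xi - y) * phi y) (a - h) (0 - h)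
                  = RInt (fun y => J (xi - y) * (phi (y + h) - phi y)) (a - h) (0 - h) :> R).
  { rewrite <- (RInt_minus (fun y => J (xi - y) * phi (y + h))) by (apply Hex; auto).
    apply RInt_ext. intros x _. unfold minus, plus, opp; simpl. ring. }
  assert (Hincr : Rabs (RInt (fun y => J (xi - y) * (phi (y + h) - phi y)) (a - h) (0 - h))
                  <= L * Rabs h).
  { eapply Rle_trans.
    - apply RInt_kernel_abs_le; [lra | |].
      + intros y. apply (continuous_minus (fun y => phi (y + h)) phi); auto.
      + intros y _. specialize (Hlip (y + h) y). replace (y + h - y) with h in Hlip by ring. exact Hlip.
    - rewrite <- (Rmult_1_r (L * Rabs h)) at 2. apply Rmult_le_compat_l.
      + apply Rmult_le_pos; [lra | apply Rabs_pos].
      + apply RInt_J_le1. lra. }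
  assert (Hedge : Rabs (RInt (fun y => J (xi - y) * phi y) (0 - h) 0) <= B * Rabs h).
  { replace (Rabs h) with (Rabs (0 - (0 - h))) by (f_equal; ring).
    apply abs_RInt_le_const_dist; [apply Hex, Hc |]. intros t.
    specialize (J_range (xi - t)). specialize (Hb t).
    rewrite Rabs_mult, (Rabs_right (J _)), (Rabs_right (phi t)) by lra. nra. }
  apply Rabs_le_between in Hincr. apply Rabs_le_between in Hedge. rewrite <- Ediff in Hincr.
  apply Rabs_le_between. split; lra.
Qed.

Lemma conv_neg_lip L phi xi xi' : admissible sigma L phi ->
  Rabs (conv_neg J phi xi' - conv_neg J phi xi) <= (L + B) * Rabs (xi' - xi).
Proof.
  intros Hphi.
  apply (is_lim_minf_abs_le (fun a => RInt (fun y => J (xi' - y) * phi y) a 0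
                                      - RInt (fun y => J (xi - y) * phi y) (a - (xi' - xi)) 0)).
  - apply is_lim_minus'; [exact (conv_neg_is_lim L phi xi' Hphi) |].
    exact (is_lim_minf_shift _ _ (- (xi' - xi)) (conv_neg_is_lim L phi xi Hphi)).
  - exists 0. intros a Ha. apply (RInt_kernel_shift_le L); auto. lra.
Qed.

Lemma conv_neg_close L1 L2 phi psi xi R0 eps eta T :
  admissible sigma L1 phi -> admissible sigma L2 psi -> 0 <= R0 ->
  (forall y, - R0 <= y <= 0 -> Rabs (psi y - phi y) <= eps) ->
  (forall b b', T <= b -> b <= b' -> RInt J b b' <= eta) -> T <= xi + R0 ->
  Rabs (conv_neg J psi xi - conv_neg J phi xi) <= eps + eta.
Proof.
  intros Hphi Hpsi HR0 Hclose Htail HT.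
  assert (Heps : 0 <= eps) by (eapply Rle_trans; [apply Rabs_pos | apply (Hclose 0); lra]).
  assert (Hd : forall y, continuous (fun y => psi y - phi y) y).
  { intros y. apply (continuous_minus psi phi); eapply admissible_continuous; eauto. }
  assert (Hexd : forall p q, ex_RInt (fun y => J (xi - y) * (psi y - phi y)) p q)
    by (intros; apply ex_RInt_continuous_R, continuous_kernel, Hd).
  apply (is_lim_minf_abs_le (fun a => RInt (fun y => J (xi - y) * psi y) a 0
                                      - RInt (fun y => J (xi - y) * phi y) a 0)).
  { apply is_lim_minus'; [exact (conv_neg_is_lim L2 psi xi Hpsi) |].
    exact (conv_neg_is_lim L1 phi xi Hphi). }
  exists (- R0). intros a Ha.
  assert (E : RInt (fun y => J (xi - y) * psi y) a 0 - RInt (fun y => J (xi - y) * phi y) a 0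
              = RInt (fun y => J (xi - y) * (psi y - phi y)) a (- R0)
                + RInt (fun y => J (xi - y) * (psi y - phi y)) (- R0) 0 :> R).
  { rewrite <- RInt_Chasles_R by apply Hexd.
    rewrite <- (RInt_minus (fun y => J (xi - y) * psi y)) by
      (apply ex_RInt_continuous_R, continuous_kernel; eapply admissible_continuous; eauto).
    apply RInt_ext. intros x _. unfold minus, plus, opp; simpl. ring. }
  rewrite E.
  assert (Hfar : Rabs (RInt (fun y => J (xi - y) * (psi y - phi y)) a (- R0)) <= eta).
  { eapply Rle_trans; [apply (RInt_kernel_abs_le xi _ a (- R0) 1); [lra | apply Hd |] |].
    - intros y _. destruct Hphi as [_ [Hp _]]. destruct Hpsi as [_ [Hq _]].
      specialize (Hp y). specialize (Hq y). apply Rabs_le_between. lra.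
    - rewrite Rmult_1_l. apply Htail; lra. }
  assert (Hnear : Rabs (RInt (fun y => J (xi - y) * (psi y - phi y)) (- R0) 0) <= eps).
  { eapply Rle_trans; [apply (RInt_kernel_abs_le xi _ (- R0) 0 eps); [lra | apply Hd | apply Hclose] |].
    rewrite <- (Rmult_1_r eps) at 2. apply Rmult_le_compat_l; [lra | apply RInt_J_le1; lra]. }
  eapply Rle_trans; [apply Rabs_triang | lra].
Qed.

Lemma conv_R_is_RInt_gen L phi x : admissible sigma L phi ->
  is_RInt_gen (fun y => J (x - y) * phi y) (Rbar_locally m_infty) (Rbar_locally p_infty)
    (conv_neg J phi x + sigma * a_fun J x).
Proof.
  intros Hphi. pose proof (admissible_continuous _ _ _ Hphi) as Hc.
  assert (Hex : forall p q, ex_RInt (fun y => J (x - y) * phi y) p q)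
    by (intros; apply ex_RInt_continuous_R, continuous_kernel, Hc).
  refine (is_RInt_gen_Chasles _ 0 (conv_neg J phi x) (sigma * a_fun J x) _ _).
  - apply is_RInt_gen_minf_is_lim; [intros; apply Hex | exact (conv_neg_is_lim L phi x Hphi)].
  - apply is_RInt_gen_pinf_of_is_lim; [intros; apply Hex |].
    apply (is_lim_ext_loc (fun b => sigma * RInt J (x - b) x)).
    + exists 0. intros b Hb.
      transitivity (RInt (fun y => sigma * J (x - y)) 0 b).
      * rewrite (RInt_scal (fun y => J (x - y))) by apply ex_RInt_continuous_R, continuous_J_reflect.
        rewrite RInt_comp_reflect, Rminus_0_r by apply J_cont. reflexivity.
      * apply RInt_ext. intros y Hy. rewrite Rmin_left, Rmax_right in Hy by lra.
        destruct Hphi as [_ [_ Hs]]. rewrite Hs by lra. apply Rmult_comm.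
    + apply (is_lim_scal_l _ sigma p_infty (a_fun J x)).
      apply (is_lim_comp (fun a => RInt J a x) (fun b => x - b) p_infty (a_fun J x) m_infty
               (a_fun_is_lim x)).
      * apply is_lim_spec. intros M. exists (x - M). intros b Hb. lra.
      * exists 0. intros b _. discriminate.
Qed.

End Kernel.




Lemma f_ratio_bounded (f : R -> R) : cond_f3 f ->
  exists g0, 0 <= g0 /\ forall u, 0 < u -> f u / u <= g0.
Proof.
  intros [g [[_ [Hlim _]] [Hf0 [_ [_ [Hg0 [_ Hrat]]]]]]].
  exists (g 0). split; [lra |]. intros u Hu.
  apply Rnot_lt_le. intros Hlt.
  set (eps := f u / u - g 0).
  assert (He : 0 < eps) by (unfold eps; lra).
  destruct (Hlim (ball (g 0) (mkposreal eps He)) (locally_ball _ _)) as [del Hdel].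
  set (y := Rmin (del / 2) u).
  assert (Hy : 0 < y /\ y <= u /\ y <= del / 2).
  { unfold y. generalize (Rmin_l (del / 2) u) (Rmin_r (del / 2) u) (cond_pos del). intros.
    split; [apply Rmin_pos; lra | lra]. }
  assert (Hball : ball 0 del y).
  { change (Rabs (y - 0) < del). rewrite Rminus_0_r, Rabs_right by lra.
    generalize (cond_pos del). lra. }
  specialize (Hdel y Hball (proj1 Hy)). change (Rabs ((f y - f 0) / y - g 0) < eps) in Hdel.
  rewrite Hf0, Rminus_0_r in Hdel.
  specialize (Hrat y u (proj1 Hy) (proj1 (proj2 Hy))).
  apply Rabs_lt_between' in Hdel. unfold eps in *. lra.
Qed.

Lemma ftilde_incr_lip (f : R -> R) (c M d : R) : cond_f3 f ->
  (forall u v, 0 <= u -> u < v -> v <= 1 -> ftilde f c M d u < ftilde f c M d v) ->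
  exists K, 0 <= K /\
   (forall u v, 0 <= u -> u <= v -> v <= 1 ->
      0 <= ftilde f c M d v - ftilde f c M d u <= K * (v - u)) /\
   ftilde f c M d 0 = 0 /\ ftilde f c M d 1 = c * M - d.
Proof.
  intros Hf Hmono.
  destruct (f_ratio_bounded f Hf) as [g0 [Hg0 Hr]].
  destruct Hf as [g [_ [Hf0 [Hf1 [_ [_ [_ Hrat]]]]]]].
  exists (Rabs (c * M - d) + g0). split; [generalize (Rabs_pos (c * M - d)); lra |].
  split; [| unfold ftilde; rewrite Hf0, Hf1; split; ring].
  intros u v Hu Huv Hv. split.
  - destruct (Rle_lt_or_eq_dec u v Huv) as [Hlt | <-]; [generalize (Hmono u v Hu Hlt Hv) |]; lra.
  - assert (Hfv : f v - f u <= g0 * (v - u)).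
    { destruct (Rle_lt_or_eq_dec 0 u Hu) as [Hu0 | <-].
      - specialize (Hrat u v Hu0 Huv). specialize (Hr u Hu0).
        assert (f v <= v * (f u / u)).
        { apply (Rmult_le_compat_r v) in Hrat; [| lra].
          replace (f v / v * v) with (f v) in Hrat by (field; lra). lra. }
        assert (v * (f u / u) - f u = (v - u) * (f u / u)) by (field; lra).
        assert ((v - u) * (f u / u) <= (v - u) * g0) by (apply Rmult_le_compat_l; lra).
        lra.
      - rewrite Hf0. destruct (Rle_lt_or_eq_dec 0 v Huv) as [Hv0 | <-]; [| rewrite Hf0; lra].
        specialize (Hr v Hv0).
        replace (f v) with (v * (f v / v)) by (field; lra).
        assert (v * (f v / v) <= v * g0) by (apply Rmult_le_compat_l; lra). lra. }
    assert ((c * M - d) * (v - u) <= Rabs (c * M - d) * (v - u))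
      by (apply Rmult_le_compat_r; [lra | apply Rle_abs]).
    unfold ftilde. lra.
Qed.

(** * The operator A and its iterates *)

Section Operator.

Variables (d : R) (J f : R -> R) (c M sigma B K : R).
Hypothesis d_pos : 0 < d.
Hypothesis c_pos : 0 < c.
Hypothesis M_pos : 0 < M.
Hypothesis sigma_range : 0 < sigma < 1.
Hypothesis J_cont : forall x, continuous J x.
Hypothesis J_range : forall x, 0 <= J x <= B.
Hypothesis J_mass : is_RInt_gen J (Rbar_locally m_infty) (Rbar_locally p_infty) 1.
Hypothesis K_nonneg : 0 <= K.
Hypothesis ftilde_incr : forall u v, 0 <= u -> u <= v -> v <= 1 ->
  0 <= ftilde f c M d v - ftilde f c M d u <= K * (v - u).
Hypothesis ftilde_0 : ftilde f c M d 0 = 0.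
Hypothesis ftilde_1 : ftilde f c M d 1 = c * M - d.

Definition source (phi : R -> R) (xi : R) : R :=
  d * conv_neg J phi xi + d * sigma * a_fun J xi + ftilde f c M d (phi xi).

Definition A_formula (phi : R -> R) (x : R) : R :=
  exp (M * x) * sigma + exp (M * x) / c * RInt (fun xi => exp (- M * xi) * source phi xi) x 0.

Lemma A_op_eq phi x :
  A_op d J f c M sigma phi x = if Rle_dec 0 x then sigma else A_formula phi x.
Proof. reflexivity. Qed.

Lemma ftilde_lip u v : 0 <= u <= 1 -> 0 <= v <= 1 ->
  Rabs (ftilde f c M d v - ftilde f c M d u) <= K * Rabs (v - u).
Proof.
  intros Hu Hv. destruct (Rle_dec u v) as [Huv | Huv].
  - specialize (ftilde_incr u v ltac:(lra) Huv ltac:(lra)).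
    rewrite Rabs_right, (Rabs_right (v - u)) by lra. lra.
  - specialize (ftilde_incr v u ltac:(lra) ltac:(lra) ltac:(lra)).
    rewrite Rabs_left1, (Rabs_left1 (v - u)) by lra. lra.
Qed.

Lemma source_range L phi xi : admissible sigma L phi -> 0 <= source phi xi <= c * M.
Proof.
  intros Hphi.
  destruct (conv_neg_a_fun_bounds J B J_cont J_range J_mass sigma L phi xi Hphi) as [HI [Ha HIa]].
  destruct Hphi as [_ [Hb _]]. specialize (Hb xi).
  assert (F0 := ftilde_incr 0 (phi xi) ltac:(lra) ltac:(lra) ltac:(lra)).
  assert (F1 := ftilde_incr (phi xi) 1 ltac:(lra) ltac:(lra) ltac:(lra)).
  assert (0 <= d * a_fun J xi) by (apply Rmult_le_pos; lra).
  assert (0 <= d * sigma * a_fun J xi <= d * a_fun J xi) by (split; nra).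
  assert (0 <= d * conv_neg J phi xi) by nra.
  assert (d * conv_neg J phi xi + d * a_fun J xi <= d) by nra.
  unfold source. lra.
Qed.

Lemma source_lip L phi xi xi' : admissible sigma L phi ->
  Rabs (source phi xi' - source phi xi) <= (d * (L + B) + d * sigma * B + K * L) * Rabs (xi' - xi).
Proof.
  intros Hphi.
  assert (H1 := conv_neg_lip J B J_cont J_range J_mass sigma L phi xi xi' Hphi).
  assert (H2 := a_fun_lip J B J_cont J_range J_mass xi xi').
  pose proof Hphi as [Hl [Hb _]].
  assert (H3 := ftilde_lip (phi xi) (phi xi') (Hb xi) (Hb xi')).
  assert (H4 := Hl xi' xi).
  unfold source.
  set (r := Rabs (xi' - xi)) in *. assert (0 <= r) by apply Rabs_pos.
  apply Rabs_le_between in H1. apply Rabs_le_between in H2. apply Rabs_le_between in H3.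
  assert (K * Rabs (phi xi' - phi xi) <= K * (L * r)) by (apply Rmult_le_compat_l; auto).
  set (dI := conv_neg J phi xi' - conv_neg J phi xi) in *.
  set (da := a_fun J xi' - a_fun J xi) in *.
  assert (- (d * ((L + B) * r)) <= d * dI <= d * ((L + B) * r)) by (split; nra).
  assert (- (d * sigma * (B * r)) <= d * sigma * da <= d * sigma * (B * r)).
  { assert (0 <= d * sigma) by nra. split; nra. }
  apply Rabs_le_between. unfold dI, da in *. split; nra.
Qed.

Lemma source_continuous L phi : admissible sigma L phi -> forall x, continuous (source phi) x.
Proof.
  intros Hphi. apply (continuous_lipschitz _ (d * (L + B) + d * sigma * B + K * L)).
  intros x y. apply (source_lip L phi y x Hphi).
Qed.

Lemma weighted_source_continuous L phi : admissible sigma L phi ->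
  forall x, continuous (fun xi => exp (- M * xi) * source phi xi) x.
Proof.
  intros Hphi x. apply (continuous_mult (fun xi => exp (- M * xi)) (source phi)).
  - apply continuous_exp_lin.
  - apply (source_continuous L phi Hphi).
Qed.

Lemma A_formula_derive L phi x : admissible sigma L phi ->
  is_derive (A_formula phi) x (M * A_formula phi x - source phi x / c).
Proof.
  intros Hphi.
  set (G := fun xi => exp (- M * xi) * source phi xi).
  assert (HG := weighted_source_continuous L phi Hphi).
  assert (HR := is_derive_plus _ _ x _ _ (is_derive_const sigma x)
                  (is_derive_scal _ x (/ c) _ (is_derive_RInt_lower G 0 x HG))).
  assert (HE : is_derive (fun y => exp (M * y)) x (M * exp (M * x))) by (auto_derive; auto; ring).
  assert (H := is_derive_mult _ _ x _ _ HE HR (fun _ _ => Rmult_comm _ _)).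
  replace (M * A_formula phi x - source phi x / c) with
    (plus (mult (M * exp (M * x)) (plus sigma (/ c * RInt G x 0)))
          (mult (exp (M * x)) (plus 0 (/ c * - G x)))).
  - apply is_derive_ext with (2 := H). intros y.
    unfold A_formula. fold G. unfold plus, mult; simpl. unfold mult; simpl. field. lra.
  - unfold A_formula. fold G. unfold plus, mult; simpl. unfold mult; simpl. unfold G.
    replace (- M * x) with (- (M * x)) by ring. rewrite exp_Ropp.
    field. split; [lra | apply Rgt_not_eq, exp_pos].
Qed.

Lemma A_formula_0 phi : A_formula phi 0 = sigma.
Proof.
  unfold A_formula. rewrite RInt_point, Rmult_0_r, exp_0.
  change (1 * sigma + 1 / c * 0 = sigma). field. lra.
Qed.

Lemma A_formula_range L phi x : admissible sigma L phi -> x <= 0 -> 0 <= A_formula phi x <= 1.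
Proof.
  intros Hphi Hx.
  set (G := fun xi => exp (- M * xi) * source phi xi).
  assert (HG := weighted_source_continuous L phi Hphi). fold G in HG.
  assert (Hsrc := fun xi => source_range L phi xi Hphi).
  assert (R0 : 0 <= RInt G x 0).
  { apply RInt_ge_0; [lra | apply ex_RInt_continuous_R, HG |].
    intros y _. unfold G. apply Rmult_le_pos; [apply Rlt_le, exp_pos | apply Hsrc]. }
  assert (R1 : RInt G x 0 <= RInt (fun xi => c * M * exp (- M * xi)) x 0).
  { apply RInt_le; [lra | apply ex_RInt_continuous_R, HG | |].
    - apply ex_RInt_continuous_R. intros y.
      apply (continuous_mult (fun _ => c * M) (fun y => exp (- M * y)));
        [apply continuous_const | apply continuous_exp_lin].
    - intros y _. unfold G. specialize (Hsrc y). rewrite Rmult_comm.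
      apply Rmult_le_compat_r; [apply Rlt_le, exp_pos | lra]. }
  rewrite RInt_scal_R, RInt_exp_neg in R1 by (auto; apply ex_RInt_continuous_R, continuous_exp_lin).
  unfold A_formula. fold G.
  assert (Ee := exp_mul_exp_opp M x).
  assert (He : 0 < exp (M * x)) by apply exp_pos.
  assert (Hec : 0 < exp (M * x) / c) by (apply Rdiv_lt_0_compat; lra).
  assert (0 <= exp (M * x) / c * RInt G x 0) by (apply Rmult_le_pos; lra).
  assert (exp (M * x) / c * RInt G x 0 <= exp (M * x) / c * (c * M * ((exp (- M * x) - 1) / M)))
    by (apply Rmult_le_compat_l; lra).
  replace (exp (M * x) / c * (c * M * ((exp (- M * x) - 1) / M)))
    with (exp (M * x) * exp (- M * x) - exp (M * x)) in * by (field; lra).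
  assert (exp (M * x) <= 1) by (apply exp_le_1; nra).
  split; nra.
Qed.

Lemma A_formula_lip L phi x y : admissible sigma L phi -> x <= 0 -> y <= 0 ->
  Rabs (A_formula phi x - A_formula phi y) <= M * Rabs (x - y).
Proof.
  intros Hphi Hx Hy.
  assert (HD := fun t => A_formula_derive L phi t Hphi).
  destruct (MVT_gen (A_formula phi) y x (fun t => M * A_formula phi t - source phi t / c))
    as [t [Ht E]].
  - intros t _. apply HD.
  - intros t _. eapply is_derive_continuity_pt, HD.
  - rewrite E, Rabs_mult. apply Rmult_le_compat_r; [apply Rabs_pos |].
    assert (Ht0 : t <= 0)
      by (destruct Ht as [_ Ht]; eapply Rle_trans; [apply Ht | apply Rmax_lub; auto]).
    assert (H1 := A_formula_range L phi t Hphi Ht0).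
    assert (H2 := source_range L phi t Hphi).
    assert (0 <= source phi t / c <= M).
    { split; [apply Rdiv_le_0_compat; lra |].
      apply (Rmult_le_reg_r c); [lra |]. field_simplify; lra. }
    apply Rabs_le_between. nra.
Qed.

Lemma A_op_admissible L phi : admissible sigma L phi -> admissible sigma M (A_op d J f c M sigma phi).
Proof.
  intros Hphi.
  assert (Hlip := fun x y => A_formula_lip L phi x y Hphi).
  split; [| split].
  - intros x y. rewrite !A_op_eq.
    destruct (Rle_dec 0 x); destruct (Rle_dec 0 y).
    + rewrite Rminus_diag, Rabs_R0. apply Rmult_le_pos; [lra | apply Rabs_pos].
    + eapply Rle_trans; [rewrite <- (A_formula_0 phi); apply Hlip; lra |].
      apply Rmult_le_compat_l; [lra |].
      rewrite (Rabs_right (0 - y)), (Rabs_right (x - y)) by lra. lra.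
    + eapply Rle_trans; [rewrite <- (A_formula_0 phi); apply Hlip; lra |].
      apply Rmult_le_compat_l; [lra |].
      rewrite (Rabs_left1 (x - 0)), (Rabs_left1 (x - y)) by lra. lra.
    + apply Hlip; lra.
  - intros x. rewrite A_op_eq. destruct (Rle_dec 0 x); [lra |].
    apply (A_formula_range L); auto. lra.
  - intros x Hx. rewrite A_op_eq. destruct (Rle_dec 0 x); [auto | lra].
Qed.

Lemma A_op_mono L1 L2 phi psi x : admissible sigma L1 phi -> admissible sigma L2 psi ->
  (forall y, phi y <= psi y) -> A_op d J f c M sigma phi x <= A_op d J f c M sigma psi x.
Proof.
  intros Hphi Hpsi Hle.
  rewrite !A_op_eq. destruct (Rle_dec 0 x); [lra |].
  unfold A_formula. apply Rplus_le_compat_l, Rmult_le_compat_l.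
  { apply Rlt_le, Rdiv_lt_0_compat; [apply exp_pos | lra]. }
  apply RInt_le; [lra | apply ex_RInt_continuous_R, (weighted_source_continuous L1), Hphi
                 | apply ex_RInt_continuous_R, (weighted_source_continuous L2), Hpsi |].
  intros y _. apply Rmult_le_compat_l; [apply Rlt_le, exp_pos |].
  assert (H1 := conv_neg_mono J B J_cont J_range J_mass sigma L1 L2 phi psi y Hphi Hpsi Hle).
  destruct Hphi as [_ [Hp _]]. destruct Hpsi as [_ [Hq _]].
  assert (H2 := ftilde_incr (phi y) (psi y) ltac:(apply Hp) (Hle y) ltac:(apply Hq)).
  unfold source. nra.
Qed.

Lemma source_close L1 L2 phi psi xi R0 e T :
  admissible sigma L1 phi -> admissible sigma L2 psi -> 0 <= R0 ->
  (forall y, - R0 <= y <= 0 -> Rabs (psi y - phi y) <= e) ->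
  (forall b b', T <= b -> b <= b' -> RInt J b b' <= e) -> T <= xi + R0 -> - R0 <= xi <= 0 ->
  Rabs (source psi xi - source phi xi) <= (2 * d + K) * e.
Proof.
  intros Hphi Hpsi HR0 Hclose Htail HT Hxi.
  assert (Hconv := conv_neg_close J B J_cont J_range J_mass sigma L1 L2 phi psi xi R0 e e T
                     Hphi Hpsi HR0 Hclose Htail HT).
  pose proof Hphi as [_ [Hp _]]. pose proof Hpsi as [_ [Hq _]].
  assert (Hft := ftilde_lip (phi xi) (psi xi) (Hp xi) (Hq xi)).
  assert (Hpt := Hclose xi Hxi).
  assert (K * Rabs (psi xi - phi xi) <= K * e) by (apply Rmult_le_compat_l; auto).
  unfold source. apply Rabs_le_between in Hconv. apply Rabs_le_between in Hft.
  assert (- (d * (e + e)) <= d * (conv_neg J psi xi - conv_neg J phi xi) <= d * (e + e))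
    by (split; nra).
  apply Rabs_le_between. split; nra.
Qed.

Lemma A_op_close L1 L2 phi psi x beta :
  admissible sigma L1 phi -> admissible sigma L2 psi -> x < 0 ->
  (forall xi, x <= xi <= 0 -> Rabs (source psi xi - source phi xi) <= beta) ->
  Rabs (A_op d J f c M sigma psi x - A_op d J f c M sigma phi x) <= - x * beta / c.
Proof.
  intros Hphi Hpsi Hx Hbeta.
  rewrite !A_op_eq. destruct (Rle_dec 0 x); [lra |]. unfold A_formula.
  assert (Hsphi := source_continuous L1 phi Hphi).
  assert (Hspsi := source_continuous L2 psi Hpsi).
  assert (E : RInt (fun xi => exp (- M * xi) * source psi xi) x 0
              - RInt (fun xi => exp (- M * xi) * source phi xi) x 0
              = RInt (fun xi => exp (- M * xi) * (source psi xi - source phi xi)) x 0 :> R).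
  { rewrite <- (RInt_minus (fun xi => exp (- M * xi) * source psi xi))
      by (apply ex_RInt_continuous_R; eapply weighted_source_continuous; eauto).
    apply RInt_ext. intros t _. unfold minus, plus, opp; simpl. ring. }
  assert (Hb0 : 0 <= beta) by (eapply Rle_trans; [apply Rabs_pos | apply (Hbeta x); lra]).
  assert (HI : Rabs (RInt (fun xi => exp (- M * xi) * (source psi xi - source phi xi)) x 0)
               <= (0 - x) * (exp (- M * x) * beta)).
  { apply abs_RInt_le_const; [lra | |].
    - apply ex_RInt_continuous_R. intros t.
      apply (continuous_mult (fun xi => exp (- M * xi)) (fun xi => source psi xi - source phi xi));
        [apply continuous_exp_lin | apply (continuous_minus (source psi) (source phi)); auto].
    - intros t Ht. rewrite Rabs_mult, Rabs_right by (apply Rle_ge, Rlt_le, exp_pos).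
      apply Rmult_le_compat; [apply Rlt_le, exp_pos | apply Rabs_pos | | apply Hbeta; lra].
      destruct (Rle_lt_or_eq_dec _ _ (proj1 Ht)) as [Hlt | <-]; [| lra].
      apply Rlt_le, exp_increasing. nra. }
  rewrite <- E in HI.
  set (Ipsi := RInt (fun xi => exp (- M * xi) * source psi xi) x 0) in *.
  set (Iphi := RInt (fun xi => exp (- M * xi) * source phi xi) x 0) in *.
  replace (exp (M * x) * sigma + exp (M * x) / c * Ipsi
           - (exp (M * x) * sigma + exp (M * x) / c * Iphi))
    with (exp (M * x) / c * (Ipsi - Iphi)) by ring.
  assert (Hec : 0 < exp (M * x) / c) by (apply Rdiv_lt_0_compat; [apply exp_pos | lra]).
  rewrite Rabs_mult, (Rabs_right (exp (M * x) / c)) by lra.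
  apply Rle_trans with (exp (M * x) / c * ((0 - x) * (exp (- M * x) * beta))).
  { apply Rmult_le_compat_l; lra. }
  replace (exp (M * x) / c * ((0 - x) * (exp (- M * x) * beta)))
    with (exp (M * x) * exp (- M * x) * (- x * beta / c)) by (field; lra).
  rewrite exp_mul_exp_opp. lra.
Qed.

Lemma A_op_is_lim_seq L (u : nat -> R -> R) phi x :
  (forall n, admissible sigma L (u n)) -> admissible sigma L phi ->
  (forall y, is_lim_seq (fun n => u n y) (phi y)) -> x < 0 ->
  is_lim_seq (fun n => A_op d J f c M sigma (u n) x) (A_op d J f c M sigma phi x).
Proof.
  intros Hu Hphi Hlim Hx. apply is_lim_seq_spec. intros eps.
  set (C := 2 * d + K).
  (* Chosen so that the bound - x * (C * e) / c of [A_op_close] is at most eps / 2. *)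
  set (e := eps * c / (2 * (C + 1) * (1 - x))).
  assert (He : 0 < e).
  { unfold e, C. apply Rdiv_lt_0_compat; [apply Rmult_lt_0_compat; [apply cond_pos | lra] |].
    apply Rmult_lt_0_compat; lra. }
  destruct (RInt_J_tail J B J_cont J_range J_mass e He) as [T HT].
  set (R0 := Rmax (- x) (T - x) + 1).
  assert (HR0 : 0 < R0 /\ - R0 <= x /\ T - x <= R0).
  { unfold R0. generalize (Rmax_l (- x) (T - x)) (Rmax_r (- x) (T - x)). lra. }
  destruct (is_lim_seq_equilipschitz_uniform u phi L (admissible_lip_nonneg sigma L phi Hphi)
              (fun n => proj1 (Hu n)) (proj1 Hphi) Hlim R0 e ltac:(lra) He) as [N HN].
  exists N. intros n Hn.
  assert (Hsrc : forall xi, x <= xi <= 0 -> Rabs (source phi xi - source (u n) xi) <= C * e).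
  { intros xi Hxi. apply (source_close L L (u n) phi xi R0 e T); auto; lra. }
  rewrite Rabs_minus_sym.
  eapply Rle_lt_trans; [apply (A_op_close L L (u n) phi x (C * e)); auto |].
  assert (HC : 0 <= C) by (unfold C; lra).
  replace (- x * (C * e) / c) with (eps / 2 * ((- x * C) / ((C + 1) * (1 - x))))
    by (unfold e; field; lra).
  assert ((- x * C) / ((C + 1) * (1 - x)) <= 1).
  { apply (Rmult_le_reg_r ((C + 1) * (1 - x))); [apply Rmult_lt_0_compat; lra |].
    unfold Rdiv. rewrite Rmult_assoc, Rinv_l, Rmult_1_r, Rmult_1_l
      by (apply Rgt_not_eq, Rmult_lt_0_compat; lra).
    nra. }
  assert (0 < eps) by apply cond_pos.
  assert (0 <= (- x * C) / ((C + 1) * (1 - x)))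
    by (apply Rdiv_le_0_compat; [nra | apply Rmult_lt_0_compat; lra]).
  nra.
Qed.

Lemma iterates_admissible L0 u0 n : admissible sigma L0 u0 ->
  admissible sigma (Rmax L0 M) (Nat.iter n (A_op d J f c M sigma) u0).
Proof.
  intros Hu0. destruct n as [| n].
  - exact (admissible_weaken _ _ _ _ (Rmax_l L0 M) Hu0).
  - apply (admissible_weaken _ M); [apply Rmax_r |].
    simpl. apply (A_op_admissible (Rmax L0 M)).
    induction n as [| n IH]; [exact (admissible_weaken _ _ _ _ (Rmax_l L0 M) Hu0) |].
    apply (admissible_weaken _ M); [apply Rmax_r |]. apply (A_op_admissible _ _ IH).
Qed.

Lemma iterates_incr L0 u0 : admissible sigma L0 u0 ->
  (forall x, u0 x <= A_op d J f c M sigma u0 x) ->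
  forall n x, Nat.iter n (A_op d J f c M sigma) u0 x <= Nat.iter (S n) (A_op d J f c M sigma) u0 x.
Proof.
  intros Hu0 Hsub n. induction n as [| n IH]; intros x; [apply Hsub |].
  apply (A_op_mono (Rmax L0 M) (Rmax L0 M) (Nat.iter n (A_op d J f c M sigma) u0)
                   (Nat.iter (S n) (A_op d J f c M sigma) u0));
    [apply iterates_admissible, Hu0 .. | exact IH].
Qed.

Lemma iterates_converge L0 u0 : admissible sigma L0 u0 ->
  (forall x, u0 x <= A_op d J f c M sigma u0 x) ->
  exists phi : R -> R,
    (forall x, is_lim_seq (fun n => Nat.iter n (A_op d J f c M sigma) u0 x) (phi x)) /\
    admissible sigma (Rmax L0 M) phi /\ (forall x, u0 x <= phi x) /\
    (forall x, x < 0 -> A_op d J f c M sigma phi x = phi x).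
Proof.
  intros Hu0 Hsub.
  set (u := fun n => Nat.iter n (A_op d J f c M sigma) u0).
  assert (Hadm : forall n, admissible sigma (Rmax L0 M) (u n))
    by (intros; apply iterates_admissible, Hu0).
  assert (Hincr := iterates_incr L0 u0 Hu0 Hsub).
  set (phi := fun x => real (Lim_seq (fun n => u n x))).
  assert (Hlim : forall x, is_lim_seq (fun n => u n x) (phi x)).
  { intros x. apply Lim_seq_correct'. apply (ex_finite_lim_seq_incr _ 1); [intros n; apply Hincr |].
    intros n. apply (Hadm n). }
  assert (Hphi := admissible_is_lim_seq _ _ u phi Hadm Hlim).
  exists phi. split; [exact Hlim | split; [exact Hphi | split]].
  - intros x.
    exact (is_lim_seq_incr_compare (fun n => u n x) (phi x) (Hlim x) (fun n => Hincr n x) 0%nat).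
  - intros x Hx.
    assert (Hnext := Hlim x). apply (is_lim_seq_incr_1 (fun n => u n x)) in Hnext.
    assert (HA := A_op_is_lim_seq _ u phi x Hadm Hphi Hlim Hx).
    apply is_lim_seq_unique in Hnext. apply is_lim_seq_unique in HA.
    change (Lim_seq (fun n => A_op d J f c M sigma (u n) x) = phi x) in Hnext.
    rewrite Hnext in HA. injection HA. auto.
Qed.

Lemma fixed_point_derive L phi x : admissible sigma L phi ->
  (forall y, y < 0 -> A_op d J f c M sigma phi y = phi y) -> x < 0 ->
  is_derive phi x (M * phi x - source phi x / c).
Proof.
  intros Hphi Hfix Hx.
  assert (Hform : forall y, y < 0 -> A_formula phi y = phi y).
  { intros y Hy. rewrite <- (Hfix y Hy), A_op_eq. destruct (Rle_dec 0 y); [lra | reflexivity]. }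
  rewrite <- (Hform x Hx).
  apply (is_derive_ext_loc (A_formula phi)); [| apply (A_formula_derive L), Hphi].
  exists (mkposreal (- x) ltac:(lra)). intros y Hy.
  change (Rabs (y - x) < - x) in Hy. apply Rabs_lt_between' in Hy. apply Hform. lra.
Qed.

Lemma fixed_point_Derive_continuous L phi x : admissible sigma L phi ->
  (forall y, y < 0 -> A_op d J f c M sigma phi y = phi y) -> x < 0 ->
  continuous (Derive phi) x.
Proof.
  intros Hphi Hfix Hx.
  apply (continuous_ext_loc _ (fun y => M * phi y - source phi y / c)).
  - exists (mkposreal (- x) ltac:(lra)). intros y Hy.
    change (Rabs (y - x) < - x) in Hy. apply Rabs_lt_between' in Hy.
    symmetry. apply is_derive_unique, (fixed_point_derive L); auto. lra.
  - apply (continuous_minus (fun y => M * phi y) (fun y => source phi y / c)).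
    + apply (continuous_mult (fun _ => M) phi);
        [apply continuous_const | eapply admissible_continuous, Hphi].
    + apply (continuous_mult (source phi) (fun _ => / c));
        [apply (source_continuous L), Hphi | apply continuous_const].
Qed.

Lemma fixed_point_equation L phi x : admissible sigma L phi ->
  (forall y, y < 0 -> A_op d J f c M sigma phi y = phi y) -> x < 0 ->
  ex_int_R (fun y => J (x - y) * phi y) /\
  d * int_R (fun y => J (x - y) * phi y) - d * phi x + c * Derive phi x + f (phi x) = 0.
Proof.
  intros Hphi Hfix Hx.
  assert (HI := conv_R_is_RInt_gen J B J_cont J_range J_mass sigma L phi x Hphi).
  split; [eexists; exact HI |].
  unfold int_R. rewrite (is_RInt_gen_unique _ _ HI).
  rewrite (is_derive_unique _ _ _ (fixed_point_derive L phi x Hphi Hfix Hx)).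
  unfold source, ftilde. field. lra.
Qed.

(** * The traveling wave as a subsolution *)

Lemma f_bound u : 0 <= u <= 1 -> Rabs (f u) <= 2 * Rabs (c * M - d).
Proof.
  intros Hu.
  assert (F0 := ftilde_incr 0 u ltac:(lra) ltac:(lra) ltac:(lra)).
  assert (F1 := ftilde_incr u 1 ltac:(lra) ltac:(lra) ltac:(lra)).
  rewrite ftilde_0, ftilde_1 in *. unfold ftilde in F0, F1.
  assert (Rabs ((c * M - d) * u) <= Rabs (c * M - d)).
  { rewrite Rabs_mult, (Rabs_right u) by lra. generalize (Rabs_pos (c * M - d)). nra. }
  assert (Rabs ((c * M - d) * u + f u) <= Rabs (c * M - d)).
  { rewrite Rabs_right by lra. generalize (Rle_abs (c * M - d)). lra. }
  replace (f u) with (((c * M - d) * u + f u) - (c * M - d) * u) by ring.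
  eapply Rle_trans; [apply Rabs_triang | rewrite Rabs_Ropp; lra].
Qed.

Variables (cstar : R) (phistar : R -> R).
Hypothesis cstar_pos : 0 < cstar.
Hypothesis c_lt_cstar : c < cstar.
Hypothesis phistar_tw : tw_solution d J f cstar phistar.

Lemma tw_range x : 0 <= phistar x <= 1.
Proof.
  destruct phistar_tw as [_ [Hmono [_ [_ [_ [Hl1 Hl0]]]]]]. split.
  - change (Rbar_le 0 (phistar x)).
    apply (is_lim_le_loc phistar (fun _ => phistar x) p_infty); [| exact Hl0 | apply is_lim_const].
    exists x. intros y Hy. apply Hmono. lra.
  - change (Rbar_le (phistar x) 1).
    apply (is_lim_le_loc (fun _ => phistar x) phistar m_infty); [| apply is_lim_const | exact Hl1].
    exists x. intros y Hy. apply Hmono. lra.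
Qed.

Lemma tw_conv_range x : 0 <= int_R (fun y => J (x - y) * phistar y) <= 1.
Proof.
  destruct phistar_tw as [_ [_ [Hder [Hex _]]]].
  assert (Hc : forall y, continuous phistar y) by (intros y; apply ex_derive_continuous_R, Hder).
  apply (is_RInt_gen_R_bounds (fun y => J (x - y) * phistar y)).
  - apply (@RInt_gen_correct R_CompleteNormedModule);
      [apply Proper_StrongProper, Rbar_locally_filter | apply Proper_StrongProper, Rbar_locally_filter
      | apply Hex].
  - intros a b Hab. split.
    + apply RInt_ge_0; [lra | apply ex_RInt_continuous_R, continuous_kernel; auto |].
      intros y _. apply Rmult_le_pos; [apply J_range | apply tw_range].
    + eapply Rle_trans; [apply RInt_kernel_le_RInt_J with B; auto; apply tw_range |].
      apply (RInt_J_le1 J B J_cont J_range J_mass). lra.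
Qed.

Lemma tw_lipschitz : exists LD, forall x y, Rabs (phistar x - phistar y) <= LD * Rabs (x - y).
Proof.
  destruct phistar_tw as [_ [_ [Hder [_ [Heq _]]]]].
  set (LD := (2 * d + 2 * Rabs (c * M - d)) / cstar). exists LD.
  assert (HD : forall x, Rabs (Derive phistar x) <= LD).
  { intros x. specialize (Heq x).
    assert (HI := tw_conv_range x). assert (Hp := tw_range x). assert (Hf := f_bound _ Hp).
    set (I := int_R (fun y => J (x - y) * phistar y)) in *.
    assert (E : Derive phistar x = - (d * I - d * phistar x + f (phistar x)) / cstar).
    { apply (Rmult_eq_reg_r cstar); [| lra]. unfold Rdiv.
      rewrite Rmult_assoc, Rinv_l, Rmult_1_r by lra. lra. }
    rewrite E. unfold LD, Rdiv. rewrite Rabs_mult, Rabs_Ropp, (Rabs_right (/ cstar))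
      by (apply Rle_ge, Rlt_le, Rinv_0_lt_compat; lra).
    apply Rmult_le_compat_r; [apply Rlt_le, Rinv_0_lt_compat; lra |].
    eapply Rle_trans; [apply Rabs_triang |].
    assert (Rabs (d * I - d * phistar x) <= 2 * d).
    { apply Rabs_le_between. split; nra. }
    lra. }
  intros x y.
  destruct (MVT_gen phistar y x (Derive phistar)) as [t [_ E]].
  - intros t _. apply Derive_correct, Hder.
  - intros t _. apply continuity_pt_filterlim, ex_derive_continuous_R, Hder.
  - rewrite E, Rabs_mult. apply Rmult_le_compat_r; [apply Rabs_pos | apply HD].
Qed.

Lemma tw_derive_nonpos y : Derive phistar y <= 0.
Proof.
  destruct phistar_tw as [_ [Hmono [Hder _]]].
  pose (pr := fun z => ex_derive_Reals_0 phistar z (Hder z)).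
  rewrite <- (Derive_Reals phistar y (pr y)).
  apply (nonpos_derivative_0 phistar pr). intros a b Hab. apply Hmono, Hab.
Qed.

Hypothesis phistar_0 : phistar 0 = sigma.

Let u0 := phi_sigma_init phistar sigma.

Lemma init_eq_neg y : y <= 0 -> u0 y = phistar y.
Proof.
  intros Hy. destruct phistar_tw as [_ [Hmono _]].
  assert (sigma <= phistar y) by (rewrite <- phistar_0; apply Hmono, Hy).
  unfold u0, phi_sigma_init, Rmax. destruct (Rle_dec (phistar y) sigma); lra.
Qed.

Lemma init_admissible LD : (forall x y, Rabs (phistar x - phistar y) <= LD * Rabs (x - y)) ->
  admissible sigma LD u0.
Proof.
  intros Hlip. destruct phistar_tw as [_ [Hmono _]]. split; [| split].
  - intros x y. eapply Rle_trans; [apply Rmax_lipschitz | apply Hlip].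
  - intros x. generalize (tw_range x). unfold u0, phi_sigma_init, Rmax.
    destruct (Rle_dec (phistar x) sigma); lra.
  - intros x Hx. assert (phistar x <= sigma) by (rewrite <- phistar_0; apply Hmono, Hx).
    unfold u0, phi_sigma_init, Rmax. destruct (Rle_dec (phistar x) sigma); lra.
Qed.

Lemma tw_conv_le_init L0 y : admissible sigma L0 u0 ->
  int_R (fun z => J (y - z) * phistar z) <= conv_neg J u0 y + sigma * a_fun J y.
Proof.
  intros Hu0. destruct phistar_tw as [_ [_ [_ [Hex _]]]].
  eapply Rle_trans; [apply Rle_abs |].
  refine (RInt_gen_norm (V := R_CompleteNormedModule) (fun z => J (y - z) * phistar z)
            (fun z => J (y - z) * u0 z) _ _ _ _ _
            (conv_R_is_RInt_gen J B J_cont J_range J_mass sigma L0 u0 y Hu0)).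
  - apply Filter_prod with (fun a => a < 0) (fun b => 0 < b); [exists 0 | exists 0 |]; simpl; auto.
    intros a b Ha Hb. simpl. lra.
  - apply Filter_prod with (fun _ => True) (fun _ => True); [exists 0 | exists 0 |]; simpl; auto.
    intros a b _ _ z _. change (Rabs (J (y - z) * phistar z) <= J (y - z) * u0 z).
    rewrite Rabs_mult, Rabs_right, (Rabs_right (phistar z))
      by (apply Rle_ge; apply J_range || apply tw_range).
    apply Rmult_le_compat_l; [apply J_range | apply Rmax_l].
  - apply (@RInt_gen_correct R_CompleteNormedModule);
      [apply Proper_StrongProper, Rbar_locally_filter | apply Proper_StrongProper, Rbar_locally_filter
      | apply Hex].
Qed.

(* By the wave equation the residual is d (int J u0 - int J phistar) + (c - cstar) phistar'. *)
Lemma init_residual_nonneg L0 y : admissible sigma L0 u0 -> y <= 0 ->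
  0 <= source u0 y + c * Derive phistar y - c * M * phistar y.
Proof.
  intros Hu0 Hy. destruct phistar_tw as [_ [_ [_ [_ [Heq _]]]]]. specialize (Heq y).
  assert (Hconv := tw_conv_le_init L0 y Hu0).
  assert (Hder := tw_derive_nonpos y).
  unfold source, ftilde. rewrite (init_eq_neg y Hy).
  assert (0 <= (c - cstar) * Derive phistar y) by nra.
  assert (0 <= d * (conv_neg J u0 y + sigma * a_fun J y - int_R (fun z => J (y - z) * phistar z)))
    by (apply Rmult_le_pos; lra).
  lra.
Qed.

Lemma init_subsolution L0 x : admissible sigma L0 u0 -> u0 x <= A_op d J f c M sigma u0 x.
Proof.
  intros Hu0. rewrite A_op_eq. destruct (Rle_dec 0 x) as [Hx | Hx].
  { destruct Hu0 as [_ [_ Hs]]. rewrite Hs; auto. lra. }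
  destruct phistar_tw as [_ [_ [Hder _]]].
  set (G := fun xi => exp (- M * xi) * source u0 xi).
  assert (HG : forall y, continuous G y) by apply (weighted_source_continuous L0 u0 Hu0).
  set (w := fun y => / c * RInt G y 0 - exp (- M * y) * phistar y).
  set (dw := fun y => - (exp (- M * y) / c) * (source u0 y + c * Derive phistar y - c * M * phistar y)).
  assert (Hdw : forall y, is_derive w y (dw y)).
  { intros y.
    assert (HE : is_derive (fun y => exp (- M * y)) y (- M * exp (- M * y)))
      by (auto_derive; auto; ring).
    assert (HP := Derive_correct _ _ (Hder y)).
    assert (H := is_derive_minus _ _ y _ _ (is_derive_scal _ y (/ c) _ (is_derive_RInt_lower G 0 y HG))
                   (is_derive_mult _ _ y _ _ HE HP (fun _ _ => Rmult_comm _ _))).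
    replace (dw y) with (minus (/ c * - G y) (plus (mult (- M * exp (- M * y)) (phistar y))
                                                   (mult (exp (- M * y)) (Derive phistar y)))).
    - apply is_derive_ext with (2 := H). intros t. reflexivity.
    - unfold dw, G, minus, plus, opp, mult; simpl. unfold mult; simpl. field. lra. }
  (* w' <= 0 on (-oo, 0], and w x >= w 0 = - sigma is the claim times exp (- M x). *)
  destruct (MVT_gen w x 0 dw) as [t [Ht E]].
  - intros y _. apply Hdw.
  - intros y _. eapply is_derive_continuity_pt, Hdw.
  - rewrite Rmin_left, Rmax_right in Ht by lra.
    assert (Hdt : dw t <= 0).
    { unfold dw. assert (0 < exp (- M * t) / c) by (apply Rdiv_lt_0_compat; [apply exp_pos | lra]).
      assert (Hres := init_residual_nonneg L0 t Hu0 ltac:(lra)). nra. }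
    assert (Hwx : w 0 <= w x) by nra.
    unfold w in Hwx. replace (- M * 0) with 0 in Hwx by ring.
    rewrite RInt_point, exp_0, phistar_0 in Hwx.
    change (/ c * 0 - 1 * sigma <= / c * RInt G x 0 - exp (- M * x) * phistar x) in Hwx.
    rewrite (init_eq_neg x) by lra. unfold A_formula. fold G.
    assert (He : 0 < exp (M * x)) by apply exp_pos.
    assert (Hmul : exp (M * x) * (exp (- M * x) * phistar x)
                   <= exp (M * x) * (/ c * RInt G x 0 + sigma)) by (apply Rmult_le_compat_l; lra).
    rewrite <- Rmult_assoc, exp_mul_exp_opp in Hmul. unfold Rdiv. lra.
Qed.

Lemma tw_squeeze_is_lim_minf (phi : R -> R) : (forall x, phistar x <= phi x <= 1) ->
  is_lim phi m_infty 1.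
Proof.
  intros Hbetween. destruct phistar_tw as [_ [_ [_ [_ [_ [Hl1 _]]]]]].
  apply (is_lim_le_le_loc phistar (fun _ => 1) phi m_infty 1); [| exact Hl1 | apply is_lim_const].
  exists 0. intros y _. apply Hbetween.
Qed.

Lemma iterates_limit_solution :
  exists phis : R -> R,
    (forall x, is_lim_seq (fun n => Nat.iter n (A_op d J f c M sigma) u0 x) (phis x)) /\
    (forall x, x < 0 -> ex_derive phis x /\ continuous (Derive phis) x) /\
    (forall x, x < 0 ->
        ex_int_R (fun y => J (x - y) * phis y) /\
        d * int_R (fun y => J (x - y) * phis y) - d * phis x + c * Derive phis x + f (phis x) = 0) /\
    is_lim phis m_infty 1 /\ (forall x, 0 <= x -> phis x = sigma) /\ (forall x, 0 <= phis x <= 1).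
Proof.
  destruct tw_lipschitz as [LD HLD].
  assert (Hu0 := init_admissible LD HLD).
  destruct (iterates_converge LD u0 Hu0 (fun x => init_subsolution LD x Hu0))
    as [phis [Hlim [Hphis [Hge Hfix]]]].
  exists phis. split; [exact Hlim |]. split; [| split; [| split]].
  - intros x Hx. split.
    + eexists. exact (fixed_point_derive _ phis x Hphis Hfix Hx).
    + exact (fixed_point_Derive_continuous _ phis x Hphis Hfix Hx).
  - intros x Hx. exact (fixed_point_equation _ phis x Hphis Hfix Hx).
  - apply tw_squeeze_is_lim_minf. intros x. split; [| apply Hphis].
    eapply Rle_trans; [apply Rmax_l | apply Hge].
  - split; apply Hphis.
Qed.

End Operator.

Theorem lemma2p1 (d : R) (J f : R -> R) (cstar sigma c M : R) (phistar : R -> R) :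
  0 < d -> cond_J J -> cond_J2 J -> cond_f3 f ->
  0 < cstar -> minimal_speed d J f cstar ->
  0 < sigma < 1 -> 0 < c < cstar ->
  0 < M ->
  (forall u v, 0 <= u -> u < v -> v <= 1 -> ftilde f c M d u < ftilde f c M d v) ->
  tw_solution d J f cstar phistar -> phistar 0 = sigma ->
  exists phis : R -> R,
    (forall x, is_lim_seq
        (fun n => Nat.iter n (A_op d J f c M sigma) (phi_sigma_init phistar sigma) x)
        (phis x)) /\
    (forall x, x < 0 -> ex_derive phis x /\ continuous (Derive phis) x) /\
    (forall x, x < 0 ->
        ex_int_R (fun y => J (x - y) * phis y) /\
        d * int_R (fun y => J (x - y) * phis y) - d * phis x
          + c * Derive phis x + f (phis x) = 0) /\
    is_lim phis m_infty 1 /\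
    (forall x, 0 <= x -> phis x = sigma) /\
    (forall x, 0 <= phis x <= 1).
Proof.
  intros Hd [Jc [[B HB] [Jpos [_ [Jmass _]]]]] _ Hf Hcstar _ Hsigma [Hc Hccstar] HM Hincr Htw H0.
  assert (Jr : forall x, 0 <= J x <= B).
  { intros x. specialize (HB x). rewrite Rabs_right in HB by apply Rle_ge, Jpos. auto. }
  destruct (ftilde_incr_lip f c M d Hf Hincr) as [K [HK [Hft [Hft0 Hft1]]]].
  exact (iterates_limit_solution d J f c M sigma B K Hd Hc HM Hsigma Jc Jr Jmass HK Hft Hft0 Hft1
           cstar phistar Hcstar Hccstar Htw H0).
Qed.
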